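(* Let $\mathfrak g$ be a $7$-dimensional real nilpotent Lie algebra and let $\varphi\in\Lambda^3\mathfrak g^*$ define a calibrated $\mathrm{G}_2$-structure on $\mathfrak g$. Then $\varphi$ is not exact; in particular $H^3(\mathfrak g^* )\neq0$.
   Context: A $3$-form $\varphi\in\Lambda^3\mathfrak g^*$ on a $7$-dimensional Lie algebra defines a $\mathrm{G}_2$-structure if there is a basis $f^1,\dots,f^7$ of $\mathfrak g^*$ with $\varphi=f^{127}+f^{347}+f^{567}+f^{135}-f^{236}-f^{146}-f^{245}$; it is calibrated if $d\varphi=0$, where $d$ is the Chevalley–Eilenberg differential, and $H^3(\mathfrak g^* )$ is the corresponding cohomology. *)

(* A 7-dimensional real Lie algebra is modelled as R^7 = 'rV[R]_7
   with a bracket; R ranges over real closed fields (contains the reals case). *)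
From HB Require Import structures.
From mathcomp Require Import all_boot all_order all_algebra.
Set Implicit Arguments. Unset Strict Implicit. Unset Printing Implicit Defensive.
Import Order.TTheory GRing.Theory Num.Theory.
Local Open Scope ring_scope.

Section Defs.
Variable R : rcfType.
Notation V := 'rV[R]_7.

Definition is_lie_bracket (br : V -> V -> V) : Prop :=
  [/\ (forall a x y z, br (a *: x + y) z = a *: br x z + br y z),
      (forall a x y z, br z (a *: x + y) = a *: br z x + br z y),
      (forall x, br x x = 0) &
      (forall x y z, br x (br y z) + br y (br z x) + br z (br x y) = 0)].

Fixpoint iter_br (br : V -> V -> V) (x : nat -> V) (n : nat) : V :=
  match n with
  | 0 => x 0%N
  | m.+1 => br (x 0%N) (iter_br br (fun i => x i.+1) m)
  end.

(* nilpotent: the lower central series reaches 0 *)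
Definition is_nilpotent (br : V -> V -> V) : Prop :=
  exists n, forall x : nat -> V, iter_br br x n = 0.

Definition is_form2 (b : V -> V -> R) : Prop :=
  [/\ (forall a x y z, b (a *: x + y) z = a * b x z + b y z),
      (forall a x y z, b z (a *: x + y) = a * b z x + b z y) &
      (forall x, b x x = 0)].

Definition is_form3 (p : V -> V -> V -> R) : Prop :=
  [/\ (forall a x y z w, p (a *: x + y) z w = a * p x z w + p y z w),
      (forall a x y z w, p w (a *: x + y) z = a * p w x z + p w y z),
      (forall a x y z w, p z w (a *: x + y) = a * p z w x + p z w y) &
      [/\ (forall x y, p x x y = 0), (forall x y, p x y x = 0) &
          (forall x y, p y x x = 0)]].

(* Chevalley--Eilenberg differential on 2-forms and 3-forms:
   d a (x_0,..,x_k) = sum_{i<j} (-1)^{i+j} a([x_i,x_j], x_0,..^i..^j..,x_k) *)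
Definition CE_d2 (br : V -> V -> V) (b : V -> V -> R) : V -> V -> V -> R :=
  fun x0 x1 x2 => - b (br x0 x1) x2 + b (br x0 x2) x1 - b (br x1 x2) x0.

Definition CE_d3 (br : V -> V -> V) (p : V -> V -> V -> R)
  : V -> V -> V -> V -> R :=
  fun x0 x1 x2 x3 =>
    - p (br x0 x1) x2 x3 + p (br x0 x2) x1 x3 - p (br x0 x3) x1 x2
    - p (br x1 x2) x0 x3 + p (br x1 x3) x0 x2 - p (br x2 x3) x0 x1.

Definition is_closed3 (br : V -> V -> V) (p : V -> V -> V -> R) : Prop :=
  forall x0 x1 x2 x3, CE_d3 br p x0 x1 x2 x3 = 0.

Definition is_exact3 (br : V -> V -> V) (p : V -> V -> V -> R) : Prop :=
  exists b, is_form2 b /\ forall x y z, p x y z = CE_d2 br b x y z.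

Definition H3_nonzero (br : V -> V -> V) : Prop :=
  exists p, [/\ is_form3 p, is_closed3 br p & ~ is_exact3 br p].

(* the k-th (1-based) covector of the basis of g^* given by the columns of F *)
Definition covec (F : 'M[R]_7) (k : nat) (x : V) : R := (x *m F) 0 (inord k.-1).

Definition wedge3 (f g h : V -> R) (x y z : V) : R :=
  f x * (g y * h z - g z * h y) - f y * (g x * h z - g z * h x)
  + f z * (g x * h y - g y * h x).

Definition G2_model (F : 'M[R]_7) (x y z : V) : R :=
  let f := covec F in
  wedge3 (f 1%N) (f 2%N) (f 7%N) x y z + wedge3 (f 3%N) (f 4%N) (f 7%N) x y z
  + wedge3 (f 5%N) (f 6%N) (f 7%N) x y z + wedge3 (f 1%N) (f 3%N) (f 5%N) x y z
  - wedge3 (f 2%N) (f 3%N) (f 6%N) x y z - wedge3 (f 1%N) (f 4%N) (f 6%N) x y z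
  - wedge3 (f 2%N) (f 4%N) (f 5%N) x y z.

Definition is_G2_structure (p : V -> V -> V -> R) : Prop :=
  exists F : 'M[R]_7, F \in unitmx /\ forall x y z, p x y z = G2_model F x y z.

End Defs.

(* If phi = d beta, nilpotency provides a nonzero central X and a vector Y
   independent of X with [g, Y] contained in the line R X: take X in the last
   nonzero term of the lower central series; either the centre contains a
   second independent vector, or the centre is R X and Y can be taken one step
   back in the series.  Then phi(X, Y, Z) = - beta([Y, Z], X) is a multiple of
   beta(X, X) = 0.  But a G2 form has no such degenerate pair: in an adapted
   basis phi(a, b, c) = <c, a x b> for the 7-dimensional cross product, and the
   Lagrange identity |a x b|^2 = |a|^2 |b|^2 - <a, b>^2 turns phi(a, b, a x b) = 0
   into the equality case of Cauchy-Schwarz. *)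

From HB Require Import structures.
From mathcomp Require Import all_boot all_order all_algebra.
From mathcomp Require Import ring.
From Stdlib Require Import Classical.
Set Implicit Arguments. Unset Strict Implicit. Unset Printing Implicit Defensive.
Import Order.TTheory GRing.Theory Num.Theory.
Local Open Scope ring_scope.

Section CrossProduct.
Variable R : comNzRingType.
Implicit Types a b c : nat -> R.

Definition dot7 a b : R := \sum_(0 <= i < 7) a i * b i.

Definition e3 (i j k : nat) a b c : R :=
  a i * (b j * c k - c j * b k) - b i * (a j * c k - c j * a k)
  + c i * (a j * b k - b j * a k).

(* Basis indices are shifted down by one: f^k of the model form is index k - 1. *)
Definition g2std a b c : R :=
  e3 0 1 6 a b c + e3 2 3 6 a b c + e3 4 5 6 a b c + e3 0 2 4 a b c
  - e3 1 2 5 a b c - e3 0 3 5 a b c - e3 1 3 4 a b c.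

Definition cross7 a b : nat -> R := fun k => g2std a b (fun i => (i == k)%:R).

Lemma g2std_dot a b c : g2std a b c = dot7 c (cross7 a b).
Proof. rewrite /dot7 unlock /cross7 /g2std /e3 /=; ring. Qed.

Lemma dot7_cross7 a b :
  dot7 (cross7 a b) (cross7 a b) = dot7 a a * dot7 b b - dot7 a b ^+ 2.
Proof. rewrite /dot7 unlock /cross7 /g2std /e3 /=; ring. Qed.

Lemma dot7_sub_scale a b t :
  dot7 a a * dot7 (fun i => b i - t * a i) (fun i => b i - t * a i)
  = dot7 a a * dot7 b b - dot7 a b ^+ 2 + (dot7 a a * t - dot7 a b) ^+ 2.
Proof. rewrite /dot7 unlock /=; ring. Qed.

End CrossProduct.

Section Nondegeneracy.
Variable R : realFieldType.
Implicit Types a b c : nat -> R.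

Lemma dot7_self_eq0 a : dot7 a a = 0 -> forall i, (i < 7)%N -> a i = 0.
Proof.
move=> /eqP; rewrite psumr_eq0 => [/allP a0 i lti7|i _]; last by rewrite -expr2 sqr_ge0.
have /a0 : i \in index_iota 0 7 by rewrite mem_index_iota.
by rewrite mulf_eq0 orbb => /eqP.
Qed.

Lemma cauchy_schwarz7_eq a b : dot7 a a != 0 -> dot7 a a * dot7 b b = dot7 a b ^+ 2 ->
  exists t, forall i, (i < 7)%N -> b i = t * a i.
Proof.
move=> aa0 gram0; exists (dot7 a b / dot7 a a) => i lti7.
have := dot7_sub_scale a b (dot7 a b / dot7 a a).
rewrite gram0 subrr add0r [_ * (_ / _)]mulrC divfK // subrr expr0n => /eqP.
rewrite mulf_eq0 (negbTE aa0) /= => /eqP /dot7_self_eq0 /(_ i lti7) /eqP.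
by rewrite subr_eq0 => /eqP.
Qed.

Lemma g2std_eq0_dependent a b : (forall c, g2std a b c = 0) ->
  (forall i, (i < 7)%N -> a i = 0) \/ exists t, forall i, (i < 7)%N -> b i = t * a i.
Proof.
move=> ab0; have [/dot7_self_eq0|aa0] := eqVneq (dot7 a a) 0; first by left.
right; apply: cauchy_schwarz7_eq => //; apply/eqP; rewrite -subr_eq0 -dot7_cross7.
by rewrite -g2std_dot ab0.
Qed.

End Nondegeneracy.

Section G2Structure.
Variable R : rcfType.
Notation V := 'rV[R]_7.

(* Junk for i >= 7, where inord i = 0. *)
Definition coord (u : V) (i : nat) : R := u 0 (inord i).

Lemma G2_modelE (F : 'M[R]_7) x y z :
  G2_model F x y z = g2std (coord (x *m F)) (coord (y *m F)) (coord (z *m F)).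
Proof. reflexivity. Qed.

Lemma coord_row (c : nat -> R) i : (i < 7)%N -> coord (\row_(j < 7) c j) i = c i.
Proof. by move=> lti7; rewrite /coord mxE inordK. Qed.

Lemma coordZ t (u : V) i : coord (t *: u) i = t * coord u i.
Proof. by rewrite /coord mxE. Qed.

Lemma coordP (u v : V) : (forall i, (i < 7)%N -> coord u i = coord v i) -> u = v.
Proof. by move=> uv; apply/rowP => j; have := uv j (ltn_ord j); rewrite /coord inord_val. Qed.

Lemma G2_model_degenerate (F : 'M[R]_7) x y : F \in unitmx ->
  (forall z, G2_model F x y z = 0) -> x = 0 \/ exists t, y = t *: x.
Proof.
move=> Funit xy0.
have xyF0 c : g2std (coord (x *m F)) (coord (y *m F)) c = 0.
  have := xy0 ((\row_(j < 7) c j) *m invmx F); rewrite G2_modelE mulmxKV // => <-.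
  by rewrite /g2std /e3 !coord_row.
have [xF0|[t yFt]] := g2std_eq0_dependent xyF0; [left|right; exists t].
  rewrite -(mulmxK Funit x) (@coordP (x *m F) 0) ?mul0mx // => i /xF0 ->.
  by rewrite /coord mxE.
rewrite -(mulmxK Funit y) (@coordP (y *m F) (t *: (x *m F))) ?scalemxAl ?mulmxK //.
by move=> i /yFt ->; rewrite -scalemxAl coordZ.
Qed.

End G2Structure.

Section UnitRows.
Variables (R : nzRingType) (n : nat).

Lemma delta_row_neq0 (i : 'I_n.+1) : delta_mx 0 i != 0 :> 'rV[R]_n.+1.
Proof. by apply/eqP => /rowP /(_ i); rewrite !mxE !eqxx /= => /eqP; rewrite oner_eq0. Qed.

Lemma delta_row_indep : ~ exists t : R, delta_mx 0 ord_max = t *: delta_mx 0 ord0 :> 'rV_n.+2.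
Proof. by move=> [t /rowP /(_ ord_max)]; rewrite !mxE /= eqxx mulr0 => /eqP; rewrite oner_eq0. Qed.

End UnitRows.

Section TwoForms.
Variables (R : rcfType) (b : 'rV[R]_7 -> 'rV[R]_7 -> R).
Hypothesis b_form : is_form2 b.

Lemma form2_0l z : b 0 z = 0.
Proof.
case: b_form => bl _ _; apply: (@addrI _ (b 0 z)).
by have := bl 1 0 0 z; rewrite !scale1r !addr0 mul1r.
Qed.

Lemma form2_Zl t x z : b (t *: x) z = t * b x z.
Proof. by case: b_form => bl _ _; have := bl t x 0 z; rewrite !addr0 form2_0l addr0. Qed.

End TwoForms.

Section LieAlgebra.
Variable R : rcfType.
Notation V := 'rV[R]_7.
Variable br : V -> V -> V.
Hypothesis br_lie : is_lie_bracket br.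

Lemma brDl x y z : br (x + y) z = br x z + br y z.
Proof. by case: br_lie => brl _ _ _; have := brl 1 x y z; rewrite !scale1r. Qed.

Lemma brDr x y z : br z (x + y) = br z x + br z y.
Proof. by case: br_lie => _ brr _ _; have := brr 1 x y z; rewrite !scale1r. Qed.

Lemma br0r z : br z 0 = 0.
Proof. by apply: (@addrI _ (br z 0)); rewrite -brDr !addr0. Qed.

Lemma brZr t x z : br z (t *: x) = t *: br z x.
Proof. by case: br_lie => _ brr _ _; have := brr t x 0 z; rewrite !addr0 br0r addr0. Qed.

Lemma brC x y : br x y = - br y x.
Proof.
case: br_lie => _ _ br_alt _; apply/eqP; rewrite -addr_eq0.
by have := br_alt (x + y); rewrite brDl !brDr !br_alt add0r addr0 => ->.
Qed.

Definition central (X : V) := forall z, br z X = 0.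

Lemma iter_br_central n x : (forall y, iter_br br y n.+1 = 0) -> central (iter_br br x n).
Proof. by move=> top z; apply: (top (fun i => if i is j.+1 then x j else z)). Qed.

Lemma last_nonzero_stage n : (forall x, iter_br br x n = 0) ->
  exists m x, iter_br br x m != 0 /\ forall y, iter_br br y m.+1 = 0.
Proof.
elim: n => [zero|n IHn top].
  by case/eqP: (delta_row_neq0 R (ord0 : 'I_7)); apply: (zero (fun=> _)).
have [/IHn //|] := classic (forall x, iter_br br x n = 0).
by move=> /not_all_ex_not[x /eqP nz]; exists n, x.
Qed.

Lemma nilpotent_adapted_pair : is_nilpotent br ->
  exists X Y, [/\ X != 0, central X, ~ (exists t, Y = t *: X)
                & forall z, exists l, br z Y = l *: X].
Proof.
move=> [n /last_nonzero_stage [[|k] [x [nz top]]]].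
  have cent v : central v := iter_br_central (fun=> v) top.
  exists (delta_mx 0 ord0), (delta_mx 0 ord_max); split.
  - exact: delta_row_neq0.
  - exact: cent.
  - exact: delta_row_indep.
  - by move=> z; exists 0; rewrite scale0r cent.
set X := iter_br br x k.+1; have centX : central X by apply: iter_br_central.
have [[Y [centY indep]]|noY] :=
    classic (exists Y, central Y /\ ~ exists t, Y = t *: X).
  by exists X, Y; split=> // z; exists 0; rewrite scale0r centY.
(* Now the centre is R X, and W lies one step back: X = [x 0, W]. *)
set W := iter_br br (fun i => x i.+1) k.
exists X, W; split=> //.
  by move=> [t Wt]; case/eqP: nz; rewrite -/X /X /= -/W Wt brZr centX scaler0.
move=> z; apply: NNPP => indep; apply: noY; exists (br z W); split=> //.
exact: (iter_br_central (fun i => if i is j.+1 then x j.+1 else z) top).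
Qed.

Lemma CE_d2_adapted_pair (b : V -> V -> R) X Y Z l :
  is_form2 b -> central X -> br Z Y = l *: X -> CE_d2 br b X Y Z = 0.
Proof.
move=> b_form centX ZY.
rewrite /CE_d2 (brC X Y) (brC X Z) (brC Y Z) !centX ZY.
rewrite oppr0 !form2_0l // -scaleNr form2_Zl //.
by case: b_form => _ _ ->; rewrite mulr0 !oppr0 !addr0.
Qed.

End LieAlgebra.


Theorem mainTheorem5 (R : rcfType) (br : 'rV[R]_7 -> 'rV[R]_7 -> 'rV[R]_7)
  (phi : 'rV[R]_7 -> 'rV[R]_7 -> 'rV[R]_7 -> R) :
  is_lie_bracket br -> is_nilpotent br ->
  is_form3 phi -> is_G2_structure phi -> is_closed3 br phi ->
  ~ is_exact3 br phi /\ H3_nonzero br.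
Proof.
move=> br_lie br_nil phi_form [F [Funit phiF]] phi_closed.
suff not_exact : ~ is_exact3 br phi by split=> //; exists phi.
move=> [b [b_form phi_db]].
have [X [Y [X0 centX indep brY]]] := nilpotent_adapted_pair br_lie br_nil.
have XY0 Z : G2_model F X Y Z = 0.
  have [l ZY] := brY Z.
  by rewrite -phiF phi_db (CE_d2_adapted_pair br_lie b_form centX ZY).
by case: (G2_model_degenerate Funit XY0) => [X_0|//]; rewrite X_0 eqxx in X0.
Qed.
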